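(* Let $H$ be a homogeneous relation on a finite set $V$ and let $A\in\mathcal F_H$ (so $|A|\ge 1$). Let $\mathcal F(A)=\{F\in\mathcal F_H : F\supseteq A\}$. Then $(\mathcal F(A),\subseteq)$ is a distributive lattice (with meet $\cap$ and join $\cup$).
   Context: $V$ is a finite set. A reflectless triple is a triple $(x,y,z)\in V^3$ with $x\neq y$ and $x\neq z$, written $(x|yz)$. A homogeneous relation $H$ on $V$ is a set of reflectless triples (we write $H(s|xy)$ when $(s|xy)\in H$) such that for every $s\in V$ the binary relation $H_s=\{(x,y): H(s|xy)\}$ is an equivalence relation on $V\setminus\{s\}$. For $X\subseteq V$ and $s\notin X$, $X$ is homogeneous with respect to $s$ if $H(s|xy)$ for all $x,y\in X$; otherwise $s$ distinguishes $X$. A homogeneous set is a nonempty $M\subseteq V$ such that no element of $V\setminus M$ distinguishes $M$; $\mathcal F_H$ denotes the family of homogeneous sets. *)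

(* V is a finite type; H s x y encodes H(s|xy). *)
From mathcomp Require Import all_boot.
Set Implicit Arguments. Unset Strict Implicit. Unset Printing Implicit Defensive.

Definition reflectless (V : finType) (H : V -> V -> V -> bool) : Prop :=
  forall s x y, H s x y -> s != x /\ s != y.

Definition homogeneous_relation (V : finType) (H : V -> V -> V -> bool) : Prop :=
  reflectless H /\
  forall s : V,
    (forall x, x != s -> H s x x) /\
    (forall x y, H s x y -> H s y x) /\
    (forall x y z, H s x y -> H s y z -> H s x z).

Definition homogeneous_wrt (V : finType) (H : V -> V -> V -> bool)
  (X : {set V}) (s : V) : Prop :=
  forall x y, x \in X -> y \in X -> H s x y.

Definition homogeneous_set (V : finType) (H : V -> V -> V -> bool)
  (M : {set V}) : Prop :=
  M != set0 /\ forall s, s \notin M -> homogeneous_wrt H M s.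

Definition F_above (V : finType) (H : V -> V -> V -> bool) (A F : {set V}) : Prop :=
  homogeneous_set H F /\ A \subset F.

From mathcomp Require Import all_boot.

(* Two homogeneous sets sharing a point are closed under intersection and
   union: an outsider of the union compares points of F and of G through the
   common point by transitivity of H_s.  Every member of F(A) contains a point
   of A, and distributivity is inherited from the Boolean algebra of sets. *)

Section HomogeneousSets.

Variables (V : finType) (H : V -> V -> V -> bool).

Lemma homogeneous_wrtS (X Y : {set V}) (s : V) :
  X \subset Y -> homogeneous_wrt H Y s -> homogeneous_wrt H X s.
Proof. by move=> /subsetP XY hY x y /XY xY /XY yY; exact: hY. Qed.

Lemma homogeneous_setI (F G : {set V}) :
  homogeneous_set H F -> homogeneous_set H G -> F :&: G != set0 ->
  homogeneous_set H (F :&: G).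
Proof.
move=> [_ hF] [_ hG] FG0; split=> // s; rewrite inE negb_and.
case/orP=> [/hF | /hG]; apply: homogeneous_wrtS; [exact: subsetIl | exact: subsetIr].
Qed.

Lemma homogeneous_setU (F G : {set V}) (a : V) :
  (forall s x y z, H s x y -> H s y z -> H s x z) ->
  homogeneous_set H F -> homogeneous_set H G -> a \in F -> a \in G ->
  homogeneous_set H (F :|: G).
Proof.
move=> htr [F0 hF] [_ hG] aF aG; split.
  by apply/set0Pn; exists a; rewrite inE aF.
move=> s; rewrite inE negb_or => /andP [/hF hsF /hG hsG] x y.
rewrite !inE => /orP [xF|xG] /orP [yF|yG].
- exact: hsF.
- by apply: (htr _ _ a); [exact: hsF | exact: hsG].
- by apply: (htr _ _ a); [exact: hsG | exact: hsF].
- exact: hsG.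
Qed.

Lemma F_aboveIU (A F G : {set V}) :
  homogeneous_relation H -> A != set0 ->
  F_above H A F -> F_above H A G ->
  F_above H A (F :&: G) /\ F_above H A (F :|: G).
Proof.
move=> [_ hR] /set0Pn [a aA] [hF AF] [hG AG].
have aF : a \in F := subsetP AF a aA.
have aG : a \in G := subsetP AG a aA.
have htr s : forall x y z, H s x y -> H s y z -> H s x z by case: (hR s) => _ [].
split; split.
- by apply: homogeneous_setI => //; apply/set0Pn; exists a; rewrite inE aF aG.
- by rewrite subsetI AF AG.
- exact: homogeneous_setU htr hF hG aF aG.
- exact: subset_trans AF (subsetUl F G).
Qed.

End HomogeneousSets.

Theorem mainTheorem3 (V : finType) (H : V -> V -> V -> bool) (A : {set V}) :
  homogeneous_relation H -> homogeneous_set H A ->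
  (forall F G, F_above H A F -> F_above H A G ->
     F_above H A (F :&: G) /\ F_above H A (F :|: G)) /\
  (forall F G K, F_above H A F -> F_above H A G -> F_above H A K ->
     F :&: (G :|: K) = (F :&: G) :|: (F :&: K) /\
     F :|: (G :&: K) = (F :|: G) :&: (F :|: K)).
Proof.
move=> hR [A0 _]; split=> [F G|F G K _ _ _].
  exact: F_aboveIU.
by split; [exact: setIUr | exact: setUIr].
Qed.
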